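(* Let $X$ be a countable set, let $w$ be an essentially locally finite weight on $X$ generating a metric $\delta=\delta_w$, let $x\in X$ and let $R>0$. Let $\mathcal P\subseteq\{\gamma\in\Pi(X)\mid \gamma(0)=x,\ l_w(\gamma)<R\}$ be an infinite set of finite paths. Then there exists an infinite path $\gamma_\infty\in\Pi_\infty(X)$ with $l_w(\gamma_\infty)\le R$ such that for every $n\in\mathbb N$ there exist infinitely many paths $\gamma\in\mathcal P$ with $\gamma(k)=\gamma_\infty(k)$ for $k=0,\dots,n$.
   Context: $\Pi(X)$ is the set of injective maps $\gamma:\{0,\dots,n\}\to X$, $n\in\mathbb N_0$ (finite paths, identified with $(\gamma(0),\dots,\gamma(n))$), and $\Pi_\infty(X)$ is the set of injective maps $\gamma:\mathbb N_0\to X$ (infinite paths). A weight on $X$ is a symmetric function $w:X\times X\to[0,\infty]$ with $w(x,y)=0$ iff $x=y$; it is essentially locally finite if $\#\{y\in X\mid w(x,y)<R\}<\infty$ for all $x\in X$, $R>0$. The $w$-length of $\gamma=(x_0,\dots,x_n)$ is $l_w(\gamma)=\sum_{i=1}^n w(x_{i-1},x_i)$, and of an infinite path $(x_0,x_1,\dots)$ it is $\sum_{i=1}^\infty w(x_{i-1},x_i)$. $\delta_w(x,y):=\inf\{l_w(\gamma)\mid\gamma\text{ a path from }x\text{ to }y\}$. *)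

From HB Require Import structures.
From mathcomp Require Import all_boot all_order all_algebra.
From mathcomp Require Import all_classical all_reals all_analysis.
Set Implicit Arguments. Unset Strict Implicit. Unset Printing Implicit Defensive.
Import Order.TTheory GRing.Theory Num.Theory.
Local Open Scope classical_set_scope.
Local Open Scope ring_scope.
Local Open Scope ereal_scope.

Definition is_weight (R : realType) (X : Type) (w : X -> X -> \bar R) : Prop :=
  (forall x y, w x y = w y x) /\ (forall x y, 0 <= w x y) /\
  (forall x y, w x y = 0 <-> x = y).

Definition ess_loc_finite (R : realType) (X : Type) (w : X -> X -> \bar R) : Prop :=
  forall (x : X) (r : R), (0 < r)%R -> finite_set [set y | w x y < r%:E].

Definition is_fpath (X : eqType) (g : seq X) : Prop := (0 < size g)%N /\ uniq g.

Definition is_ipath (X : Type) (g : nat -> X) : Prop := injective g.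

Fixpoint lw (R : realType) (X : Type) (w : X -> X -> \bar R) (g : seq X) : \bar R :=
  match g with
  | a :: ((b :: _) as t) => w a b + lw w t
  | _ => 0
  end.

Definition lw_inf (R : realType) (X : Type) (w : X -> X -> \bar R) (g : nat -> X)
  : \bar R := \sum_(i <oo) w (g i) (g i.+1).

Definition delta (R : realType) (X : eqType) (w : X -> X -> \bar R) (x y : X)
  : \bar R :=
  ereal_inf [set lw w g | g in [set g : seq X | is_fpath g /\ head x g = x /\
                                               last x g = y]].

Definition generates_metric (R : realType) (X : eqType) (w : X -> X -> \bar R)
  : Prop :=
  (forall x y, delta w x y \is a fin_num) /\
  (forall x y, delta w x y = 0 -> x = y) /\
  (forall x y, delta w x y = delta w y x) /\
  (forall x y z, delta w x z <= delta w x y + delta w y z).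

From HB Require Import structures.
From mathcomp Require Import all_boot all_order all_algebra.
From mathcomp Require Import all_classical all_reals all_analysis.
Set Implicit Arguments. Unset Strict Implicit. Unset Printing Implicit Defensive.
Import Order.TTheory GRing.Theory Num.Theory.
Local Open Scope classical_set_scope.
Local Open Scope ring_scope.
Local Open Scope ereal_scope.

(* A König-type argument.  Call a finite sequence rich when infinitely many
   paths of P extend it; [:: x] is rich.  Every path of P extending s by a
   vertex y has w(last s, y) < r, and by essential local finiteness there are
   only finitely many such y, so by pigeonhole some one-vertex extension of a
   rich sequence is again rich.  Dependent choice yields a sequence of vertices
   all of whose initial segments are rich, hence prefixes of paths of P: they
   are duplicate-free and of length < r, so the limit path is injective and of
   length <= r. *)

Section PathLength.
Variables (R : realType) (X : Type) (w : X -> X -> \bar R).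

Lemma lw_cons2 (a b : X) (t : seq X) : lw w [:: a, b & t] = w a b + lw w (b :: t).
Proof. by []. Qed.

Lemma lw_cat (a : X) (s u : seq X) :
  lw w (a :: s ++ u) = lw w (a :: s) + lw w (last a s :: u).
Proof.
elim: s a => [|b s IH] a; first by rewrite [lw w [:: a]]/= add0e.
by rewrite cat_cons !lw_cons2 IH addeA.
Qed.

Lemma lw_rcons (s : seq X) (y : X) : (0 < size s)%N ->
  lw w (rcons s y) = lw w s + w (last y s) y.
Proof.
by case: s => // a s _; rewrite -cats1 lw_cat [lw w [:: _; _]]/= !adde0.
Qed.

Lemma lw_mkseq (f : nat -> X) (n : nat) :
  lw w (mkseq f n.+1) = (\sum_(0 <= i < n) w (f i) (f i.+1))%R.
Proof.
elim: n => [|n IH]; first by rewrite big_geq.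
by rewrite mkseqS lw_rcons ?size_mkseq // IH big_nat_recr // mkseqS last_rcons.
Qed.

Hypothesis w_ge0 : forall a b, 0 <= w a b.

Lemma lw_ge0 (s : seq X) : 0 <= lw w s.
Proof. by elim: s => [|a [|b s] IH] //; rewrite lw_cons2 adde_ge0. Qed.

End PathLength.

Lemma lw_prefix (R : realType) (X : eqType) (w : X -> X -> \bar R) (s g : seq X) :
  (forall a b, 0 <= w a b) -> prefix s g -> lw w s <= lw w g.
Proof.
move=> w_ge0 /prefixP[t ->]; case: s => [|a s]; first exact: lw_ge0.
by rewrite cat_cons lw_cat leeDl ?lw_ge0.
Qed.

Section Extensions.
Variables (X : eqType) (P : set (seq X)).

Definition extensions (s : seq X) := [set g | P g /\ prefix s g].

Lemma infinite_extensions_rcons (s : seq X) (N : set X) : finite_set N ->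
  (forall y g, P g -> prefix (rcons s y) g -> N y) ->
  infinite_set (extensions s) ->
  exists y, infinite_set (extensions (rcons s y)).
Proof.
move=> finN next_in_N; apply: contra_notP => /forallNP all_finite.
apply: (@sub_finite_set _ _
  ([set s] `|` \bigcup_(y in N) extensions (rcons s y))); last first.
  rewrite finite_setU; split; first exact: finite_set1.
  by apply: bigcup_finite => // y _; exact: contrapT (all_finite y).
move=> g [Pg /prefixP[[|y t] g_eq]]; subst g; first by left; rewrite cats0.
have pre_g : prefix (rcons s y) (s ++ y :: t).
  by apply/prefixP; exists t; rewrite -cats1 -catA.
by right; exists y; [exact: next_in_N Pg pre_g | split].
Qed.

End Extensions.

Lemma exists_branch (X : choiceType) (Q : seq X -> Prop) (x : X) :
  Q [:: x] -> (forall s, Q (x :: s) -> exists y, Q (rcons (x :: s) y)) ->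
  exists f : nat -> X, forall n, Q (mkseq f n.+1).
Proof.
move=> Qx Q_rcons.
pose next s := rcons s (xget x [set y | Q (rcons s y)]).
pose branch n := iter n next [:: x].
pose f n := last x (branch n).
have branchE n : branch n = mkseq f n.+1.
  by elim: n => [|n IH] //; rewrite mkseqS -IH /f [branch n.+1]/= last_rcons.
exists f; elim=> [|n IH]; first exact: Qx.
rewrite -branchE in IH; rewrite -branchE; change (Q (next (branch n))).
have [s branch_n] : exists s, branch n = x :: s by rewrite branchE; eexists.
apply: (@xgetPex _ x [set y | Q (rcons (branch n) y)]).
by rewrite branch_n; apply: Q_rcons; rewrite -branch_n.
Qed.

Theorem lemma2p3 (R : realType) (X : countType) (w : X -> X -> \bar R)
  (hw : is_weight w) (hloc : ess_loc_finite w) (hmet : generates_metric w)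
  (x : X) (r : R) (hr : (0 < r)%R) (P : set (seq X))
  (hP : P `<=` [set g | is_fpath g /\ head x g = x /\ lw w g < r%:E])
  (hPinf : ~ finite_set P) :
  exists ginf : nat -> X, is_ipath ginf /\ lw_inf w ginf <= r%:E /\
    forall n : nat,
      ~ finite_set [set g | P g /\ (n < size g)%N /\
                            forall k : nat, (k <= n)%N -> nth x g k = ginf k].
Proof.
have w_ge0 : forall a b, 0 <= w a b by case: hw => _ [].
pose rich s := infinite_set (extensions P s).
have rich_x : rich [:: x].
  apply: sub_infinite_set hPinf => g Pg; split => //.
  have [[+ _] [+ _]] := hP _ Pg.
  by case: g {Pg} => // a t _ /= ->; rewrite eqxx prefix0s.
have rich_rcons s : rich (x :: s) -> exists y, rich (rcons (x :: s) y).
  apply: (infinite_extensions_rcons (hloc (last x s) r hr)).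
  move=> y g /hP[_ [_ lw_g]] /(lw_prefix w_ge0) le_lw /=.
  apply: le_lt_trans lw_g; apply: le_trans le_lw.
  by rewrite lw_rcons // leeDr ?lw_ge0.
have [f rich_f] := exists_branch rich_x rich_rcons.
have f_in_P n : exists2 g, P g & prefix (mkseq f n.+1) g.
  by have [g [Pg pre_g]] := infinite_setN0 (rich_f n); exists g.
exists f; split; [|split].
- move=> i j; have [g /hP[[_ uniq_g] _] pre_g] := f_in_P (maxn i j).
  have /mkseq_uniqP f_inj := prefix_uniq pre_g uniq_g.
  by apply: f_inj; rewrite !inE ltnS ?leq_maxl ?leq_maxr.
- apply: lime_le; first exact: is_cvg_nneseries.
  apply: nearW => n /=; rewrite -lw_mkseq.
  have [g /hP[_ [_ lw_g]] /(lw_prefix w_ge0) le_lw] := f_in_P n.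
  exact/ltW/(le_lt_trans le_lw).
- move=> n; apply: sub_infinite_set (rich_f n) => g [Pg /prefixP[t g_eq]].
  subst g; split=> //; rewrite size_cat size_mkseq; split=> [|k le_kn].
    exact: leq_addr.
  by rewrite nth_cat size_mkseq ltnS le_kn nth_mkseq.
Qed.
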